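(* Let $\mathcal{E}$ be a right exact category and let $\mathcal{A}\subseteq\mathcal{E}$ be a right percolating subcategory. (1) The category $\mathrm{C}^b(\mathcal{E})$ of bounded cochain complexes has a natural right exact structure, in which a sequence of chain maps is a conflation iff it is a conflation in $\mathcal{E}$ in each degree. (2) With this structure, $\mathrm{C}^b(\mathcal{A})$ is a right percolating subcategory of $\mathrm{C}^b(\mathcal{E})$.
   Context: A conflation category is an additive category with a class of kernel-cokernel pairs (conflations; kernel part = inflation $\rightarrowtail$, cokernel part = deflation $\twoheadrightarrow$) closed under isomorphism. It is right exact if $1_0$ is a deflation, deflations compose, and pullbacks of deflations along arbitrary morphisms exist and are deflations. A non-empty full subcategory $\mathcal{A}$ of a conflation category $\mathcal{E}$ is right percolating if: (P1) for every conflation $A'\rightarrowtail A\twoheadrightarrow A''$, $A\in\mathcal{A}$ iff $A',A''\in\mathcal{A}$; (P2) every morphism $C\to A$ with $A\in\mathcal{A}$ factors as a deflation $C\twoheadrightarrow A'$ with $A'\in\mathcal{A}$ followed by a morphism $A'\to A$; (P3) for an inflation $C\rightarrowtail D$ and a deflation $C\twoheadrightarrow A$ with $A\in\mathcal{A}$, the pushout exists and the induced maps $A\to P$, $D\to P$ are an inflation and a deflation respectively; (P4) for every inflation $A\rightarrowtail X$ and deflation $X\twoheadrightarrow B$ with $A,B\in\mathcal{A}$ there are $A',B'\in\mathcal{A}$, deflations $A\twoheadrightarrow A'$, $X\twoheadrightarrow B'$, an inflation $A'\rightarrowtail B'$ and a morphism $B'\to B$ with $A\rightarrowtail X\twoheadrightarrow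 B'$ equal to $A\twoheadrightarrow A'\rightarrowtail B'$ and $X\twoheadrightarrow B$ equal to $X\twoheadrightarrow B'\to B$. *)

From Stdlib Require Import ZArith FunctionalExtensionality ProofIrrelevance.

Set Implicit Arguments.
Unset Strict Implicit.

(** * Categories (composition written diagrammatically: f ;; g = "f then g") *)
Record Cat := {
  Ob : Type;
  Hom : Ob -> Ob -> Type;
  comp : forall X Y Z : Ob, Hom X Y -> Hom Y Z -> Hom X Z;
  idm : forall X : Ob, Hom X X;
  comp_idl : forall X Y (f : Hom X Y), comp (idm X) f = f;
  comp_idr : forall X Y (f : Hom X Y), comp f (idm Y) = f;
  comp_assoc : forall X Y Z W (f : Hom X Y) (g : Hom Y Z) (h : Hom Z W),
      comp (comp f g) h = comp f (comp g h)
}.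
Arguments Hom {c} _ _.
Arguments comp {c X Y Z} _ _.
Arguments idm {c} X.

Notation "f ;; g" := (comp f g) (at level 40, left associativity).

Section CatDefs.
Variable C : Cat.

Definition is_initial (Z : Ob C) : Prop := forall Y : Ob C, exists! f : Hom Z Y, True.
Definition is_terminal (Z : Ob C) : Prop := forall Y : Ob C, exists! f : Hom Y Z, True.
Definition is_zero (Z : Ob C) : Prop := is_initial Z /\ is_terminal Z.

Definition zero_mor {X Y : Ob C} (f : Hom X Y) : Prop :=
  exists (Z : Ob C) (g : Hom X Z) (h : Hom Z Y), is_zero Z /\ f = g ;; h.

Definition is_iso {X Y : Ob C} (f : Hom X Y) : Prop :=
  exists g : Hom Y X, f ;; g = idm X /\ g ;; f = idm Y.

Definition is_biproduct (X Y S : Ob C) (i1 : Hom X S) (i2 : Hom Y S)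
  (p1 : Hom S X) (p2 : Hom S Y) : Prop :=
  i1 ;; p1 = idm X /\ i2 ;; p2 = idm Y /\ zero_mor (i1 ;; p2) /\ zero_mor (i2 ;; p1) /\
  (forall W (f : Hom W X) (g : Hom W Y), exists! u : Hom W S, u ;; p1 = f /\ u ;; p2 = g) /\
  (forall W (f : Hom X W) (g : Hom Y W), exists! u : Hom S W, i1 ;; u = f /\ i2 ;; u = g).

(** h = f + g, for the canonical (semi-additive) addition induced by biproducts. *)
Definition is_sum {X Y : Ob C} (f g h : Hom X Y) : Prop :=
  exists (S : Ob C) (i1 i2 : Hom Y S) (p1 p2 : Hom S Y) (dl : Hom X S) (nb : Hom S Y),
    is_biproduct i1 i2 p1 p2 /\ dl ;; p1 = f /\ dl ;; p2 = g /\
    i1 ;; nb = idm Y /\ i2 ;; nb = idm Y /\ h = dl ;; nb.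

(** Additive category (as a property of the category): zero object, binary
    biproducts, and the induced commutative monoids Hom(X,Y) are groups
    (equivalently, each identity has an additive inverse). *)
Definition additive : Prop :=
  (exists Z : Ob C, is_zero Z) /\
  (forall X Y : Ob C, exists S (i1 : Hom X S) (i2 : Hom Y S) (p1 : Hom S X) (p2 : Hom S Y),
      is_biproduct i1 i2 p1 p2) /\
  (forall X : Ob C, exists (n h : Hom X X), is_sum (idm X) n h /\ zero_mor h).

Definition is_kernel {A B D : Ob C} (i : Hom A B) (p : Hom B D) : Prop :=
  zero_mor (i ;; p) /\
  forall W (g : Hom W B), zero_mor (g ;; p) -> exists! u : Hom W A, u ;; i = g.

Definition is_cokernel {A B D : Ob C} (p : Hom B D) (i : Hom A B) : Prop :=
  zero_mor (i ;; p) /\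
  forall W (g : Hom B W), zero_mor (i ;; g) -> exists! u : Hom D W, p ;; u = g.

Definition kc_pair {A B D : Ob C} (i : Hom A B) (p : Hom B D) : Prop :=
  is_kernel i p /\ is_cokernel p i.

Definition seq_class : Type :=
  forall A B D : Ob C, Hom A B -> Hom B D -> Prop.

Definition is_pullback {P X Y Z : Ob C} (q1 : Hom P X) (q2 : Hom P Y)
  (f : Hom X Z) (g : Hom Y Z) : Prop :=
  q1 ;; f = q2 ;; g /\
  forall W (a : Hom W X) (b : Hom W Y), a ;; f = b ;; g ->
    exists! u : Hom W P, u ;; q1 = a /\ u ;; q2 = b.

Definition is_pushout {X Y Z P : Ob C} (f : Hom Z X) (g : Hom Z Y)
  (q1 : Hom X P) (q2 : Hom Y P) : Prop :=
  f ;; q1 = g ;; q2 /\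
  forall W (a : Hom X W) (b : Hom Y W), f ;; a = g ;; b ->
    exists! u : Hom P W, q1 ;; u = a /\ q2 ;; u = b.

Section WithConfl.
Variable Cf : seq_class.

Definition inflation {A B : Ob C} (i : Hom A B) : Prop :=
  exists (D : Ob C) (p : Hom B D), Cf i p.
Definition deflation {B D : Ob C} (p : Hom B D) : Prop :=
  exists (A : Ob C) (i : Hom A B), Cf i p.

Definition conflation_category : Prop :=
  additive /\
  (forall A B D (i : Hom A B) (p : Hom B D), Cf i p -> kc_pair i p) /\
  (forall A B D A' B' D' (i : Hom A B) (p : Hom B D) (i' : Hom A' B') (p' : Hom B' D')
     (a : Hom A A') (b : Hom B B') (d : Hom D D'),
     Cf i p -> is_iso a -> is_iso b -> is_iso d ->
     i ;; b = a ;; i' -> p ;; d = b ;; p' -> Cf i' p').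

Definition right_exact : Prop :=
  conflation_category /\
  (forall Z : Ob C, is_zero Z -> deflation (idm Z)) /\
  (forall X Y Z (p : Hom X Y) (q : Hom Y Z),
              deflation p -> deflation q -> deflation (p ;; q)) /\
  (forall B D D' (p : Hom B D) (f : Hom D' D), deflation p ->
              exists (P : Ob C) (q1 : Hom P B) (q2 : Hom P D'),
                is_pullback q1 q2 p f /\ deflation q2).

(** Right percolating subcategory, given as a predicate on objects
    (the full subcategory it spans). *)
Definition right_percolating (inA : Ob C -> Prop) : Prop :=
  (exists X, inA X) /\
  (forall A' A A'' (i : Hom A' A) (p : Hom A A''), Cf i p ->
              (inA A <-> (inA A' /\ inA A''))) /\
  (forall X A (f : Hom X A), inA A ->
              exists (A' : Ob C) (p : Hom X A') (g : Hom A' A),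
                inA A' /\ deflation p /\ f = p ;; g) /\
  (forall X D A (i : Hom X D) (p : Hom X A), inflation i -> deflation p -> inA A ->
              exists (P : Ob C) (a : Hom A P) (d : Hom D P),
                is_pushout p i a d /\ inflation a /\ deflation d) /\
  (forall A X B (a : Hom A X) (b : Hom X B), inA A -> inA B ->
              inflation a -> deflation b ->
              exists (A' B' : Ob C) (q : Hom A A') (r : Hom X B') (j : Hom A' B') (s : Hom B' B),
                inA A' /\ inA B' /\ deflation q /\ deflation r /\ inflation j /\
                a ;; r = q ;; j /\ b = r ;; s).

End WithConfl.
End CatDefs.

Section Complexes.
Variable C : Cat.

Record complex := {
  cx : Z -> Ob C;
  cd : forall n : Z, Hom (cx n) (cx (n + 1));
  cdd : forall n : Z, zero_mor (cd n ;; cd (n + 1))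
}.

Definition bounded (X : complex) : Prop :=
  exists a b : Z, forall n : Z, (n < a \/ b < n)%Z -> is_zero (cx X n).

Record bcomplex := { bc : complex; bc_bounded : bounded bc }.

Record chain_map (X Y : bcomplex) := {
  cm : forall n : Z, Hom (cx (bc X) n) (cx (bc Y) n);
  cm_comm : forall n : Z, cd (bc X) n ;; cm (n + 1) = cm n ;; cd (bc Y) n
}.

Lemma chain_map_ext (X Y : bcomplex) (f g : chain_map X Y) :
  (forall n, cm f n = cm g n) -> f = g.
Proof.
  destruct f as [f fc], g as [g gc]; simpl; intro H.
  assert (f = g) by (apply functional_extensionality_dep; exact H).
  subst g. f_equal. apply proof_irrelevance.
Qed.

Definition cm_id (X : bcomplex) : chain_map X X.
Proof.
  refine {| cm := fun n => idm (cx (bc X) n) |}.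
  intro n. now rewrite comp_idl, comp_idr.
Defined.

Definition cm_comp (X Y W : bcomplex) (f : chain_map X Y) (g : chain_map Y W) :
  chain_map X W.
Proof.
  refine {| cm := fun n => cm f n ;; cm g n |}.
  intro n. rewrite <- comp_assoc, (cm_comm f), comp_assoc, (cm_comm g), comp_assoc.
  reflexivity.
Defined.

Definition Cb : Cat.
Proof.
  refine {| Ob := bcomplex; Hom := chain_map; comp := cm_comp; idm := cm_id |}.
  - intros X Y f; apply chain_map_ext; intro n; simpl; apply comp_idl.
  - intros X Y f; apply chain_map_ext; intro n; simpl; apply comp_idr.
  - intros X Y W V f g h; apply chain_map_ext; intro n; simpl; apply comp_assoc.
Defined.

Definition cb_confl (Cf : seq_class C) : seq_class Cb :=
  fun X Y W (f : chain_map X Y) (g : chain_map Y W) =>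
    forall n : Z, Cf _ _ _ (cm f n) (cm g n).

Definition cb_sub (inA : Ob C -> Prop) : Ob Cb -> Prop :=
  fun X : bcomplex => forall n : Z, inA (cx (bc X) n).

End Complexes.

(* Everything in C^b(E) is computed degreewise.  Zero objects, biproducts,
   kernels and cokernels of conflations, pullbacks along deflations and the
   pushouts of P3 exist in each degree; their structure maps are jointly monic
   or jointly epic, so the differentials and the mediating chain maps are
   induced by the degreewise universal properties.  This gives the right exact
   structure on C^b(E) and the axioms P1 and P3 for C^b(A).
   For P2 and P4 the degreewise factorizations must be chosen compatibly with
   the differentials.  They are built by descending recursion on the degree:
   above the range of the complexes identities will do, and one goes down a
   degree using that two maps from an object into A factor through a common
   deflation onto an object of A (by P2, P3 and P1); for P4 the axiom P4 of A
   is then applied to this common deflation. *)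

From Stdlib Require Import ZArith Lia ProofIrrelevance
  IndefiniteDescription ChoiceFacts.

Local Open Scope Z_scope.

Lemma dependent_functional_choice {I : Type} {T : I -> Type} (P : forall i, T i -> Prop) :
  (forall i, exists x, P i x) -> exists f : forall i, T i, forall i, P i (f i).
Proof. exact (non_dep_dep_functional_choice functional_choice _ P). Qed.

Lemma choose_objects {C : Cat} {I : Type} {F : I -> Ob C -> Type}
    (P : forall i K, F i K -> Prop) :
  (forall i, exists K (x : F i K), P i K x) ->
  exists (K : I -> Ob C) (x : forall i, F i (K i)), forall i, P i (K i) (x i).
Proof.
  intro H.
  destruct (dependent_functional_choice (T := fun i => {K : Ob C & F i K})
              (fun i Kx => P i (projT1 Kx) (projT2 Kx))) as [f Hf].
  - intro i. destruct (H i) as (K & x & Hx). now exists (existT _ K x).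
  - now exists (fun i => projT1 (f i)), (fun i => projT2 (f i)).
Qed.

Section CategoryFacts.
Context {C : Cat}.

Definition mono {X Y : Ob C} (f : Hom X Y) : Prop :=
  forall W (u v : Hom W X), u ;; f = v ;; f -> u = v.
Definition epi {X Y : Ob C} (f : Hom X Y) : Prop :=
  forall W (u v : Hom Y W), f ;; u = f ;; v -> u = v.

Definition jointly_monic {P X Y : Ob C} (f : Hom P X) (g : Hom P Y) : Prop :=
  forall W (u v : Hom W P), u ;; f = v ;; f -> u ;; g = v ;; g -> u = v.
Definition jointly_epic {X Y P : Ob C} (f : Hom X P) (g : Hom Y P) : Prop :=
  forall W (u v : Hom P W), f ;; u = f ;; v -> g ;; u = g ;; v -> u = v.

Lemma mono_jointly_monic {X Y : Ob C} (f : Hom X Y) : mono f -> jointly_monic f f.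
Proof. intros Hf W u v Huv _. exact (Hf W u v Huv). Qed.
Lemma epi_jointly_epic {X Y : Ob C} (f : Hom X Y) : epi f -> jointly_epic f f.
Proof. intros Hf W u v Huv _. exact (Hf W u v Huv). Qed.

Lemma zero_from_eq {Z Y : Ob C} : is_zero Z -> forall f g : Hom Z Y, f = g.
Proof.
  intros [Hi _] f g. destruct (Hi Y) as [u [_ Hu]].
  now rewrite <- (Hu f I), <- (Hu g I).
Qed.

Lemma zero_to_eq {X Z : Ob C} : is_zero Z -> forall f g : Hom X Z, f = g.
Proof.
  intros [_ Ht] f g. destruct (Ht X) as [u [_ Hu]].
  now rewrite <- (Hu f I), <- (Hu g I).
Qed.

Lemma zero_from {Z Y : Ob C} : is_zero Z -> exists f : Hom Z Y, True.
Proof. intros [Hi _]. destruct (Hi Y) as [u _]. eauto. Qed.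
Lemma zero_to {X Z : Ob C} : is_zero Z -> exists f : Hom X Z, True.
Proof. intros [_ Ht]. destruct (Ht X) as [u _]. eauto. Qed.

Lemma zero_mor_eq {X Y : Ob C} (f g : Hom X Y) : zero_mor f -> zero_mor g -> f = g.
Proof.
  intros [Z [a [b [HZ ->]]]] [Z' [c [d [HZ' ->]]]].
  destruct (zero_from (Y := Z') HZ) as [u _].
  rewrite (zero_to_eq HZ' c (a ;; u)), (zero_from_eq HZ b (u ;; d)).
  now rewrite comp_assoc.
Qed.

Lemma zero_mor_compl {X Y W : Ob C} (f : Hom X Y) (g : Hom Y W) :
  zero_mor f -> zero_mor (f ;; g).
Proof. intros [Z [a [b [HZ ->]]]]. exists Z, a, (b ;; g). now rewrite comp_assoc. Qed.
Lemma zero_mor_compr {X Y W : Ob C} (f : Hom X Y) (g : Hom Y W) :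
  zero_mor g -> zero_mor (f ;; g).
Proof. intros [Z [a [b [HZ ->]]]]. exists Z, (f ;; a), b. now rewrite comp_assoc. Qed.
Lemma zero_mor_through {X Z Y : Ob C} (f : Hom X Z) (g : Hom Z Y) :
  is_zero Z -> zero_mor (f ;; g).
Proof. intros H. now exists Z, f, g. Qed.
Lemma zero_mor_src {X Y : Ob C} (f : Hom X Y) : is_zero X -> zero_mor f.
Proof. intros H. rewrite <- (comp_idl f). now apply zero_mor_through. Qed.

Lemma retract_of_zero {Z W : Ob C} (u : Hom W Z) (v : Hom Z W) :
  is_zero Z -> u ;; v = idm W -> is_zero W.
Proof.
  intros HZ Huv. split.
  - intro Y. destruct (zero_from (Y := Y) HZ) as [h _]. exists (u ;; h). split; auto.
    intros f _. rewrite <- (comp_idl f), <- Huv, comp_assoc.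
    f_equal. apply zero_from_eq; auto.
  - intro Y. destruct (zero_to (X := Y) HZ) as [h _]. exists (h ;; v). split; auto.
    intros f _. rewrite <- (comp_idr f), <- Huv, <- comp_assoc.
    f_equal. apply zero_to_eq; auto.
Qed.

(* P is a retract of the zero object X, through any map X -> P. *)
Lemma jointly_monic_zero {P X Y : Ob C} (f : Hom P X) (g : Hom P Y) :
  jointly_monic f g -> is_zero X -> is_zero Y -> is_zero P.
Proof.
  intros Hfg HX HY. destruct (zero_from (Y := P) HX) as [h _].
  apply (retract_of_zero f h HX), Hfg; [apply zero_to_eq | apply zero_to_eq]; auto.
Qed.

Lemma jointly_epic_zero {X Y P : Ob C} (f : Hom X P) (g : Hom Y P) :
  jointly_epic f g -> is_zero X -> is_zero Y -> is_zero P.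
Proof.
  intros Hfg HX HY. destruct (zero_to (X := P) HX) as [h _].
  apply (retract_of_zero h f HX), Hfg; [apply zero_from_eq | apply zero_from_eq]; auto.
Qed.

Lemma zero_iso {U V : Ob C} (f : Hom U V) : is_zero U -> is_zero V -> is_iso f.
Proof.
  intros HU HV. destruct (zero_from (Y := U) HV) as [g _].
  exists g. split; apply zero_from_eq; auto.
Qed.

Lemma kernel_mono {A B D : Ob C} (i : Hom A B) (p : Hom B D) : is_kernel i p -> mono i.
Proof.
  intros [H0 H] W u v Huv. destruct (H W (u ;; i)) as [w [_ Hw]].
  { rewrite comp_assoc. now apply zero_mor_compr. }
  rewrite <- (Hw u eq_refl). now apply Hw.
Qed.

Lemma cokernel_epi {A B D : Ob C} (p : Hom B D) (i : Hom A B) : is_cokernel p i -> epi p.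
Proof.
  intros [H0 H] W u v Huv. destruct (H W (p ;; u)) as [w [_ Hw]].
  { rewrite <- comp_assoc. now apply zero_mor_compl. }
  rewrite <- (Hw u eq_refl). now apply Hw.
Qed.

Lemma pullback_jointly_monic {P X Y Z : Ob C} (q1 : Hom P X) (q2 : Hom P Y)
    (f : Hom X Z) (g : Hom Y Z) :
  is_pullback q1 q2 f g -> jointly_monic q1 q2.
Proof.
  intros [Hc H] W u v H1 H2. destruct (H W (u ;; q1) (u ;; q2)) as [w [_ Hw]].
  { now rewrite !comp_assoc, Hc. }
  rewrite <- (Hw u (conj eq_refl eq_refl)). now apply Hw.
Qed.

Lemma pushout_jointly_epic {X Y Z P : Ob C} (f : Hom Z X) (g : Hom Z Y)
    (q1 : Hom X P) (q2 : Hom Y P) :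
  is_pushout f g q1 q2 -> jointly_epic q1 q2.
Proof.
  intros [Hc H] W u v H1 H2. destruct (H W (q1 ;; u) (q2 ;; u)) as [w [_ Hw]].
  { now rewrite <- !comp_assoc, Hc. }
  rewrite <- (Hw u (conj eq_refl eq_refl)). now apply Hw.
Qed.

Lemma biproduct_jointly_monic {X Y S : Ob C} (i1 : Hom X S) (i2 : Hom Y S)
    (p1 : Hom S X) (p2 : Hom S Y) :
  is_biproduct i1 i2 p1 p2 -> jointly_monic p1 p2.
Proof.
  intros (_ & _ & _ & _ & H & _) W u v H1 H2.
  destruct (H W (u ;; p1) (u ;; p2)) as [w [_ Hw]].
  rewrite <- (Hw u (conj eq_refl eq_refl)). now apply Hw.
Qed.

Lemma biproduct_jointly_epic {X Y S : Ob C} (i1 : Hom X S) (i2 : Hom Y S)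
    (p1 : Hom S X) (p2 : Hom S Y) :
  is_biproduct i1 i2 p1 p2 -> jointly_epic i1 i2.
Proof.
  intros (_ & _ & _ & _ & _ & H) W u v H1 H2.
  destruct (H W (i1 ;; u) (i2 ;; u)) as [w [_ Hw]].
  rewrite <- (Hw u (conj eq_refl eq_refl)). now apply Hw.
Qed.

Lemma cokernel_unique {A P U V : Ob C} (a : Hom A P) (c : Hom P V) (t : Hom P U) :
  is_cokernel c a -> is_cokernel t a -> exists psi : Hom U V, is_iso psi /\ t ;; psi = c.
Proof.
  intros Hc Ht. pose proof (cokernel_epi _ _ Hc) as Ec. pose proof (cokernel_epi _ _ Ht) as Et.
  destruct Hc as [Hc0 Hc1], Ht as [Ht0 Ht1].
  destruct (Hc1 U t Ht0) as [phi [Hphi _]]. destruct (Ht1 V c Hc0) as [psi [Hpsi _]].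
  exists psi. split; auto. exists phi. split.
  - apply Et. now rewrite <- comp_assoc, Hpsi, Hphi, comp_idr.
  - apply Ec. now rewrite <- comp_assoc, Hphi, Hpsi, comp_idr.
Qed.

Section WithZero.
Context {Z0 : Ob C}.
Hypothesis hZ0 : is_zero Z0.

Definition zm (X Y : Ob C) : Hom X Y :=
  proj1_sig (constructive_indefinite_description _ (zero_to (X := X) hZ0)) ;;
  proj1_sig (constructive_indefinite_description _ (zero_from (Y := Y) hZ0)).

Lemma zm_zero_mor X Y : zero_mor (zm X Y).
Proof. apply zero_mor_through; auto. Qed.
Lemma zero_mor_zm {X Y} (f : Hom X Y) : zero_mor f -> f = zm X Y.
Proof. intros; apply zero_mor_eq; auto using zm_zero_mor. Qed.
Lemma zm_comp {X Y V} (h : Hom Y V) : zm X Y ;; h = zm X V.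
Proof. apply zero_mor_zm, zero_mor_compl, zm_zero_mor. Qed.
Lemma comp_zm {X Y V} (h : Hom V X) : h ;; zm X Y = zm V Y.
Proof. apply zero_mor_zm, zero_mor_compr, zm_zero_mor. Qed.

Lemma jointly_monic_zero_mor {P X Y W : Ob C} (f : Hom P X) (g : Hom P Y) (u : Hom W P) :
  jointly_monic f g -> zero_mor (u ;; f) -> zero_mor (u ;; g) -> zero_mor u.
Proof.
  intros Hfg Hf Hg. replace u with (zm W P); [apply zm_zero_mor|].
  symmetry. apply Hfg; rewrite zm_comp; now apply zero_mor_zm.
Qed.

Lemma jointly_epic_zero_mor {X Y P W : Ob C} (f : Hom X P) (g : Hom Y P) (u : Hom P W) :
  jointly_epic f g -> zero_mor (f ;; u) -> zero_mor (g ;; u) -> zero_mor u.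
Proof.
  intros Hfg Hf Hg. replace u with (zm P W); [apply zm_zero_mor|].
  symmetry. apply Hfg; rewrite comp_zm; now apply zero_mor_zm.
Qed.

End WithZero.
End CategoryFacts.

Record biprod (C : Cat) (X Y : Ob C) := {
  bS : Ob C; bi1 : Hom X bS; bi2 : Hom Y bS; bp1 : Hom bS X; bp2 : Hom bS Y;
  bpH : is_biproduct bi1 bi2 bp1 bp2 }.
Arguments bS {C X Y}. Arguments bi1 {C X Y}. Arguments bi2 {C X Y}.
Arguments bp1 {C X Y}. Arguments bp2 {C X Y}. Arguments bpH {C X Y}.

Section Pairing.
Context {C : Cat} {X Y : Ob C} (b : biprod C X Y).

Lemma pair_ex {W} (f : Hom W X) (g : Hom W Y) :
  exists! u : Hom W (bS b), u ;; bp1 b = f /\ u ;; bp2 b = g.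
Proof. destruct (bpH b) as (_ & _ & _ & _ & H & _). apply H. Qed.
Lemma copair_ex {W} (f : Hom X W) (g : Hom Y W) :
  exists! u : Hom (bS b) W, bi1 b ;; u = f /\ bi2 b ;; u = g.
Proof. destruct (bpH b) as (_ & _ & _ & _ & _ & H). apply H. Qed.

Definition pair {W} (f : Hom W X) (g : Hom W Y) : Hom W (bS b) :=
  proj1_sig (constructive_indefinite_description _ (pair_ex f g)).
Definition copair {W} (f : Hom X W) (g : Hom Y W) : Hom (bS b) W :=
  proj1_sig (constructive_indefinite_description _ (copair_ex f g)).

Lemma pair_spec {W} (f : Hom W X) (g : Hom W Y) :
  pair f g ;; bp1 b = f /\ pair f g ;; bp2 b = g.
Proof. exact (proj1 (proj2_sig (constructive_indefinite_description _ (pair_ex f g)))). Qed.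
Lemma copair_spec {W} (f : Hom X W) (g : Hom Y W) :
  bi1 b ;; copair f g = f /\ bi2 b ;; copair f g = g.
Proof. exact (proj1 (proj2_sig (constructive_indefinite_description _ (copair_ex f g)))). Qed.

Lemma pair_p1 {W} (f : Hom W X) (g : Hom W Y) : pair f g ;; bp1 b = f.
Proof. apply pair_spec. Qed.
Lemma pair_p2 {W} (f : Hom W X) (g : Hom W Y) : pair f g ;; bp2 b = g.
Proof. apply pair_spec. Qed.
Lemma copair_i1 {W} (f : Hom X W) (g : Hom Y W) : bi1 b ;; copair f g = f.
Proof. apply copair_spec. Qed.
Lemma copair_i2 {W} (f : Hom X W) (g : Hom Y W) : bi2 b ;; copair f g = g.
Proof. apply copair_spec. Qed.

Lemma pair_unique {W} (f : Hom W X) (g : Hom W Y) (u : Hom W (bS b)) :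
  u ;; bp1 b = f -> u ;; bp2 b = g -> u = pair f g.
Proof.
  intros. apply (biproduct_jointly_monic _ _ _ _ (bpH b)); now rewrite ?pair_p1, ?pair_p2.
Qed.
Lemma copair_unique {W} (f : Hom X W) (g : Hom Y W) (u : Hom (bS b) W) :
  bi1 b ;; u = f -> bi2 b ;; u = g -> u = copair f g.
Proof.
  intros. apply (biproduct_jointly_epic _ _ _ _ (bpH b)); now rewrite ?copair_i1, ?copair_i2.
Qed.

Lemma comp_pair {V W} (h : Hom V W) (f : Hom W X) (g : Hom W Y) :
  h ;; pair f g = pair (h ;; f) (h ;; g).
Proof. apply pair_unique; now rewrite comp_assoc, ?pair_p1, ?pair_p2. Qed.
Lemma copair_comp {V W} (h : Hom W V) (f : Hom X W) (g : Hom Y W) :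
  copair f g ;; h = copair (f ;; h) (g ;; h).
Proof. apply copair_unique; now rewrite <- comp_assoc, ?copair_i1, ?copair_i2. Qed.

End Pairing.

(* Eckmann-Hilton: adding through the codiagonal ([add]) or through the
   diagonal ([add_diag]) gives one commutative and associative operation. *)
Section SemiAdditive.
Context {C : Cat} {Z0 : Ob C}.
Hypothesis hZ0 : is_zero Z0.
Hypothesis has_biproducts :
  forall X Y : Ob C, exists S i1 i2 p1 p2, @is_biproduct C X Y S i1 i2 p1 p2.

Local Notation zm := (zm hZ0).

Definition chosen_biprod (X Y : Ob C) : biprod C X Y.
Proof.
  destruct (constructive_indefinite_description _ (has_biproducts X Y)) as [S H].
  destruct (constructive_indefinite_description _ H) as [i1 H1].
  destruct (constructive_indefinite_description _ H1) as [i2 H2].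
  destruct (constructive_indefinite_description _ H2) as [p1 H3].
  destruct (constructive_indefinite_description _ H3) as [p2 H4].
  exact {| bpH := H4 |}.
Defined.

Definition add {X Y} (f g : Hom X Y) : Hom X Y :=
  pair (chosen_biprod Y Y) f g ;; copair (chosen_biprod Y Y) (idm Y) (idm Y).
Definition add_diag {X Y} (f g : Hom X Y) : Hom X Y :=
  pair (chosen_biprod X X) (idm X) (idm X) ;; copair (chosen_biprod X X) f g.

Lemma compDr {V X Y} (h : Hom V X) (f g : Hom X Y) : h ;; add f g = add (h ;; f) (h ;; g).
Proof. unfold add. now rewrite <- comp_assoc, comp_pair. Qed.
Lemma add_diag_compDl {X Y V} (h : Hom Y V) (f g : Hom X Y) :
  add_diag f g ;; h = add_diag (f ;; h) (g ;; h).
Proof. unfold add_diag. now rewrite comp_assoc, copair_comp. Qed.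

Lemma addr0 {X Y} (f : Hom X Y) : add f (zm X Y) = f.
Proof.
  unfold add. set (b := chosen_biprod Y Y).
  pose proof (bpH b) as (Hi1 & _ & Hz1 & _).
  rewrite <- (pair_unique b _ _ (f ;; bi1 b)).
  - now rewrite comp_assoc, copair_i1, comp_idr.
  - now rewrite comp_assoc, Hi1, comp_idr.
  - apply zero_mor_zm. rewrite comp_assoc. now apply zero_mor_compr.
Qed.
Lemma add0r {X Y} (f : Hom X Y) : add (zm X Y) f = f.
Proof.
  unfold add. set (b := chosen_biprod Y Y).
  pose proof (bpH b) as (_ & Hi2 & _ & Hz2 & _).
  rewrite <- (pair_unique b _ _ (f ;; bi2 b)).
  - now rewrite comp_assoc, copair_i2, comp_idr.
  - apply zero_mor_zm. rewrite comp_assoc. now apply zero_mor_compr.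
  - now rewrite comp_assoc, Hi2, comp_idr.
Qed.
Lemma add_diag_r0 {X Y} (f : Hom X Y) : add_diag f (zm X Y) = f.
Proof.
  unfold add_diag. set (b := chosen_biprod X X).
  pose proof (bpH b) as (Hi1 & _ & _ & Hz & _).
  rewrite <- (copair_unique b _ _ (bp1 b ;; f)).
  - now rewrite <- comp_assoc, pair_p1, comp_idl.
  - now rewrite <- comp_assoc, Hi1, comp_idl.
  - apply zero_mor_zm. rewrite <- comp_assoc. now apply zero_mor_compl.
Qed.
Lemma add_diag_0r {X Y} (f : Hom X Y) : add_diag (zm X Y) f = f.
Proof.
  unfold add_diag. set (b := chosen_biprod X X).
  pose proof (bpH b) as (_ & Hi2 & Hz & _).
  rewrite <- (copair_unique b _ _ (bp2 b ;; f)).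
  - now rewrite <- comp_assoc, pair_p2, comp_idl.
  - apply zero_mor_zm. rewrite <- comp_assoc. now apply zero_mor_compl.
  - now rewrite <- comp_assoc, Hi2, comp_idl.
Qed.

Lemma add_interchange {X Y} (a b c d : Hom X Y) :
  add_diag (add a b) (add c d) = add (add_diag a c) (add_diag b d).
Proof.
  unfold add_diag at 1. set (bX := chosen_biprod X X).
  rewrite <- (copair_unique bX (add a b) (add c d)
                (add (copair bX a c) (copair bX b d))).
  - now rewrite compDr.
  - now rewrite compDr, !copair_i1.
  - now rewrite compDr, !copair_i2.
Qed.

Lemma add_diagE {X Y} (f g : Hom X Y) : add_diag f g = add f g.
Proof.
  rewrite <- (add_diag_r0 f) at 2. rewrite <- (add_diag_0r g) at 2.
  now rewrite <- add_interchange, addr0, add0r.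
Qed.
Lemma addC {X Y} (f g : Hom X Y) : add f g = add g f.
Proof.
  rewrite <- add_diagE. rewrite <- (add0r f) at 1. rewrite <- (addr0 g) at 1.
  now rewrite add_interchange, add_diag_0r, add_diag_r0.
Qed.
Lemma addA {X Y} (f g h : Hom X Y) : add (add f g) h = add f (add g h).
Proof.
  rewrite <- (add_diagE (add f g) h). rewrite <- (add0r h) at 1.
  now rewrite add_interchange, add_diag_r0, add_diagE.
Qed.
Lemma compDl {X Y V} (h : Hom Y V) (f g : Hom X Y) : add f g ;; h = add (f ;; h) (g ;; h).
Proof. rewrite <- !add_diagE. apply add_diag_compDl. Qed.

Lemma is_sum_add {X Y} (f g h : Hom X Y) : is_sum f g h -> h = add f g.
Proof.
  intros (S & i1 & i2 & p1 & p2 & dl & nb & Hb & H1 & H2 & H3 & H4 & ->).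
  pose proof Hb as (Hi1 & Hi2 & Hz1 & Hz2 & _).
  set (b := chosen_biprod Y Y). set (phi := pair b p1 p2).
  assert (E1 : dl ;; phi = pair b f g) by (unfold phi; now rewrite comp_pair, H1, H2).
  assert (E2 : phi ;; copair b (idm Y) (idm Y) = nb).
  { apply (biproduct_jointly_epic _ _ _ _ Hb); rewrite <- comp_assoc; unfold phi;
      rewrite comp_pair.
    - rewrite Hi1, (zero_mor_zm hZ0 _ Hz1), H3. exact (addr0 (idm Y)).
    - rewrite Hi2, (zero_mor_zm hZ0 _ Hz2), H4. exact (add0r (idm Y)). }
  unfold add; fold b. now rewrite <- E1, <- E2, comp_assoc.
Qed.

(* Additive inverses are unique, so both composites are the inverse of d. *)
Lemma additive_inverse_natural {X Y} (d : Hom X Y) (nX : Hom X X) (nY : Hom Y Y) :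
  add (idm X) nX = zm X X -> add (idm Y) nY = zm Y Y -> nX ;; d = d ;; nY.
Proof.
  intros HX HY.
  assert (Ea : add d (nX ;; d) = zm X Y).
  { rewrite <- (comp_idl d) at 1. now rewrite <- compDl, HX, zm_comp. }
  assert (Eb : add d (d ;; nY) = zm X Y).
  { rewrite <- (comp_idr d) at 1. now rewrite <- compDr, HY, comp_zm. }
  now rewrite <- (addr0 (nX ;; d)), <- Eb, <- addA, (addC _ d), Ea, add0r.
Qed.

End SemiAdditive.

Section RightExact.
Context {C : Cat} {Cf : seq_class C}.
Hypothesis HRE : right_exact Cf.

Lemma conflation_kc {A B D} {i : Hom A B} {p : Hom B D} : Cf _ _ _ i p -> kc_pair i p.
Proof. destruct HRE as [(_ & H & _) _]. apply H. Qed.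

Lemma conflation_iso_closed {A B D A' B' D'} {i : Hom A B} {p : Hom B D}
    {i' : Hom A' B'} {p' : Hom B' D'} {a : Hom A A'} {b : Hom B B'} {d : Hom D D'} :
  Cf _ _ _ i p -> is_iso a -> is_iso b -> is_iso d ->
  i ;; b = a ;; i' -> p ;; d = b ;; p' -> Cf _ _ _ i' p'.
Proof. destruct HRE as [(_ & _ & H) _]. apply H. Qed.

Lemma conflation_mono {A B D} {i : Hom A B} {p : Hom B D} : Cf _ _ _ i p -> mono i.
Proof. intro H. apply (kernel_mono i p), (conflation_kc H). Qed.
Lemma conflation_epi {A B D} {i : Hom A B} {p : Hom B D} : Cf _ _ _ i p -> epi p.
Proof. intro H. apply (cokernel_epi p i), (conflation_kc H). Qed.
Lemma inflation_mono {A B} {i : Hom A B} : inflation Cf i -> mono i.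
Proof. intros (D & p & H). exact (conflation_mono H). Qed.
Lemma deflation_epi {A B} {p : Hom A B} : deflation Cf p -> epi p.
Proof. intros (D & i & H). exact (conflation_epi H). Qed.

Lemma zero_idm_deflation {Z : Ob C} : is_zero Z -> deflation Cf (idm Z).
Proof. destruct HRE as (_ & H & _). apply H. Qed.

Lemma deflation_comp {X Y Z} {p : Hom X Y} {q : Hom Y Z} :
  deflation Cf p -> deflation Cf q -> deflation Cf (p ;; q).
Proof. destruct HRE as (_ & _ & H & _). apply H. Qed.

Lemma deflation_pullback {B D D'} (p : Hom B D) (f : Hom D' D) : deflation Cf p ->
  exists (P : Ob C) (q1 : Hom P B) (q2 : Hom P D'), is_pullback q1 q2 p f /\ deflation Cf q2.
Proof. destruct HRE as (_ & _ & _ & H). apply H. Qed.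

Lemma idm_iso (X : Ob C) : is_iso (idm X).
Proof. exists (idm X). split; apply comp_idl. Qed.

Lemma deflation_iso_closed {B D B' D'} {p : Hom B D} {p' : Hom B' D'}
    {b : Hom B B'} {d : Hom D D'} :
  deflation Cf p -> is_iso b -> is_iso d -> p ;; d = b ;; p' -> deflation Cf p'.
Proof.
  intros (A & i & H) Hb Hd Hc. exists A, (i ;; b).
  apply (conflation_iso_closed H (idm_iso A) Hb Hd); auto. now rewrite comp_idl.
Qed.

(* A pullback of the deflation [idm Z0] along [U -> Z0] is isomorphic to U. *)
Lemma iso_deflation {U V} (phi : Hom U V) : is_iso phi -> deflation Cf phi.
Proof.
  intros Hphi. destruct HRE as [[[[Z0 hZ0] _] _] _].
  destruct (zero_to (X := U) hZ0) as [t _].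
  destruct (deflation_pullback (idm Z0) t (zero_idm_deflation hZ0))
    as (P & q1 & q2 & Hpb & Hq2).
  destruct Hpb as [Hc Hup].
  destruct (Hup U t (idm U)) as [w [[Hw1 Hw2] _]].
  { now rewrite comp_idl, comp_idr. }
  assert (Hqw : q2 ;; w = idm P).
  { apply (pullback_jointly_monic _ _ _ _ (conj Hc Hup)).
    - apply zero_to_eq; auto.
    - now rewrite comp_assoc, Hw2, comp_idr, comp_idl. }
  apply (deflation_iso_closed (p := q2) (b := q2) (d := phi) Hq2); auto.
  now exists w.
Qed.

Lemma pushout_cokernel {K X U A P} (k : Hom K X) (u : Hom X U) (v : Hom K A)
    (a : Hom A P) (d : Hom X P) (t : Hom P U) :
  Cf _ _ _ k u -> is_pushout v k a d -> epi d ->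
  zero_mor (a ;; t) -> d ;; t = u -> is_cokernel t a.
Proof.
  intros Hku [Hc _] Hd Hat Hdt. split; auto.
  destruct (conflation_kc Hku) as [_ [_ Hu]].
  intros V g Hg. destruct (Hu V (d ;; g)) as [x [Hx Hxu]].
  { rewrite <- comp_assoc, <- Hc, comp_assoc. now apply zero_mor_compr. }
  exists x. split.
  - apply Hd. now rewrite <- comp_assoc, Hdt.
  - intros x' Hx'. apply Hxu. now rewrite <- Hdt, comp_assoc, Hx'.
Qed.

End RightExact.

Declare Scope complex_scope.
Notation "X .[ n ]" := (cx (bc X) n) (at level 2, left associativity, format "X .[ n ]")
  : complex_scope.
Notation "X .d[ n ]" := (cd (bc X) n) (at level 2, left associativity, format "X .d[ n ]")
  : complex_scope.
Notation "X ~> Y" := (@Hom (Cb _) X Y) (at level 99) : complex_scope.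
Local Open Scope complex_scope.

Section BoundedComplexes.
Context {E : Cat} {Z0 : Ob E}.
Hypothesis hZ0 : is_zero Z0.

Lemma cm_eq {X Y : bcomplex E} {f g : X ~> Y} : f = g -> forall n, cm f n = cm g n.
Proof. now intros ->. Qed.

Definition mk_bcomplex (P : Z -> Ob E) (dP : forall n, Hom (P n) (P (n + 1)))
    (Hdd : forall n, zero_mor (dP n ;; dP (n + 1)))
    (Hb : exists a b : Z, forall n, (n < a \/ b < n) -> is_zero (P n)) : bcomplex E :=
  {| bc := {| cx := P; cd := dP; cdd := Hdd |}; bc_bounded := Hb |}.

Definition zero_bcomplex : bcomplex E.
Proof.
  refine (mk_bcomplex (fun _ => Z0) (fun _ => idm Z0) _ _).
  - intro; now apply zero_mor_src.
  - now exists 0, 0.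
Defined.

Lemma zero_bcomplex_is_zero : is_zero (C := Cb E) zero_bcomplex.
Proof.
  split; intro Y.
  - unshelve eexists {| cm := fun n => _ : Hom zero_bcomplex.[n] Y.[n] |}.
    + apply (proj1_sig (constructive_indefinite_description _ (zero_from hZ0))).
    + intro; apply zero_from_eq; auto.
    + split; auto. intros g _. apply chain_map_ext. intro n. apply zero_from_eq; auto.
  - unshelve eexists {| cm := fun n => _ : Hom Y.[n] zero_bcomplex.[n] |}.
    + apply (proj1_sig (constructive_indefinite_description _ (zero_to hZ0))).
    + intro; apply zero_to_eq; auto.
    + split; auto. intros g _. apply chain_map_ext. intro n. apply zero_to_eq; auto.
Qed.

Lemma is_zero_degreewise (X : bcomplex E) : is_zero (C := Cb E) X -> forall n, is_zero X.[n].
Proof.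
  intros HX n. pose proof zero_bcomplex_is_zero as H0.
  destruct (zero_to (C := Cb E) (X := X) H0) as [u _],
    (zero_from (C := Cb E) (Y := X) H0) as [v _].
  apply (retract_of_zero (cm u n) (cm v n) hZ0).
  exact (cm_eq (zero_from_eq HX (u ;; v) (@idm (Cb E) X)) n).
Qed.

Lemma cb_zero_mor_iff {X Y : bcomplex E} (f : X ~> Y) :
  zero_mor f <-> forall n, zero_mor (cm f n).
Proof.
  split.
  - intros (Z & g & h & HZ & ->) n. apply zero_mor_through, is_zero_degreewise, HZ.
  - intros H. pose proof zero_bcomplex_is_zero as H0.
    destruct (zero_to (C := Cb E) (X := X) H0) as [u _],
      (zero_from (C := Cb E) (Y := Y) H0) as [v _].
    exists zero_bcomplex, u, v. split; auto.
    apply chain_map_ext. intro n. apply zero_mor_eq; auto. now apply zero_mor_through.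
Qed.

Lemma cb_iso_degreewise {X Y : bcomplex E} (f : X ~> Y) :
  is_iso f -> forall n, is_iso (cm f n).
Proof. intros [g [H1 H2]] n. exists (cm g n). exact (conj (cm_eq H1 n) (cm_eq H2 n)). Qed.

Lemma bounded_of_zero_pair (P : Z -> Ob E) (X1 X2 : bcomplex E) :
  (forall n, is_zero X1.[n] -> is_zero X2.[n] -> is_zero (P n)) ->
  exists a b, forall n, (n < a \/ b < n) -> is_zero (P n).
Proof.
  intros H. destruct (bc_bounded X1) as (a1 & b1 & H1), (bc_bounded X2) as (a2 & b2 & H2).
  exists (Z.min a1 a2), (Z.max b1 b2). intros n Hn.
  apply H; [apply H1 | apply H2]; lia.
Qed.

Section DegreewiseDifferentials.
Variables (P : Z -> Ob E) (dP : forall n, Hom (P n) (P (n + 1))).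

Lemma dd_of_jointly_monic (Y1 Y2 : bcomplex E)
    (k1 : forall n, Hom (P n) Y1.[n]) (k2 : forall n, Hom (P n) Y2.[n]) :
  (forall n, jointly_monic (k1 n) (k2 n)) ->
  (forall n, dP n ;; k1 (n + 1) = k1 n ;; Y1.d[n]) ->
  (forall n, dP n ;; k2 (n + 1) = k2 n ;; Y2.d[n]) ->
  forall n, zero_mor (dP n ;; dP (n + 1)).
Proof.
  intros Hjm H1 H2 n. apply (jointly_monic_zero_mor hZ0 _ _ _ (Hjm (n + 1 + 1))).
  - rewrite comp_assoc, H1, <- comp_assoc, H1, comp_assoc. apply zero_mor_compr, cdd.
  - rewrite comp_assoc, H2, <- comp_assoc, H2, comp_assoc. apply zero_mor_compr, cdd.
Qed.

Lemma dd_of_jointly_epic (X1 X2 : bcomplex E)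
    (k1 : forall n, Hom X1.[n] (P n)) (k2 : forall n, Hom X2.[n] (P n)) :
  (forall n, jointly_epic (k1 n) (k2 n)) ->
  (forall n, k1 n ;; dP n = X1.d[n] ;; k1 (n + 1)) ->
  (forall n, k2 n ;; dP n = X2.d[n] ;; k2 (n + 1)) ->
  forall n, zero_mor (dP n ;; dP (n + 1)).
Proof.
  intros Hje H1 H2 n. apply (jointly_epic_zero_mor hZ0 _ _ _ (Hje n)).
  - rewrite <- comp_assoc, H1, comp_assoc, H1, <- comp_assoc. apply zero_mor_compl, cdd.
  - rewrite <- comp_assoc, H2, comp_assoc, H2, <- comp_assoc. apply zero_mor_compl, cdd.
Qed.

End DegreewiseDifferentials.

Lemma jointly_monic_chain_comm {W S Y1 Y2 : bcomplex E} (k1 : S ~> Y1) (k2 : S ~> Y2)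
    (g1 : W ~> Y1) (g2 : W ~> Y2) (u : forall n, Hom W.[n] S.[n]) :
  (forall n, jointly_monic (cm k1 n) (cm k2 n)) ->
  (forall n, u n ;; cm k1 n = cm g1 n) -> (forall n, u n ;; cm k2 n = cm g2 n) ->
  forall n, W.d[n] ;; u (n + 1) = u n ;; S.d[n].
Proof.
  intros Hjm H1 H2 n. apply (Hjm (n + 1)); rewrite !comp_assoc.
  - rewrite H1, (cm_comm k1), <- comp_assoc, H1. apply cm_comm.
  - rewrite H2, (cm_comm k2), <- comp_assoc, H2. apply cm_comm.
Qed.

Lemma jointly_epic_chain_comm {W S X1 X2 : bcomplex E} (k1 : X1 ~> S) (k2 : X2 ~> S)
    (g1 : X1 ~> W) (g2 : X2 ~> W) (u : forall n, Hom S.[n] W.[n]) :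
  (forall n, jointly_epic (cm k1 n) (cm k2 n)) ->
  (forall n, cm k1 n ;; u n = cm g1 n) -> (forall n, cm k2 n ;; u n = cm g2 n) ->
  forall n, S.d[n] ;; u (n + 1) = u n ;; W.d[n].
Proof.
  intros Hje H1 H2 n. apply (Hje n); rewrite <- !comp_assoc.
  - rewrite H1, <- (cm_comm k1), comp_assoc, H1. apply cm_comm.
  - rewrite H2, <- (cm_comm k2), comp_assoc, H2. apply cm_comm.
Qed.

Lemma chain_lift_jointly_monic {W S Y1 Y2 : bcomplex E} (k1 : S ~> Y1) (k2 : S ~> Y2)
    (g1 : W ~> Y1) (g2 : W ~> Y2) :
  (forall n, jointly_monic (cm k1 n) (cm k2 n)) ->
  (forall n, exists u, u ;; cm k1 n = cm g1 n /\ u ;; cm k2 n = cm g2 n) ->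
  exists! u : W ~> S, u ;; k1 = g1 /\ u ;; k2 = g2.
Proof.
  intros Hjm Hex. destruct (dependent_functional_choice _ Hex) as [u Hu].
  exists {| cm := u; cm_comm := jointly_monic_chain_comm k1 k2 g1 g2 u Hjm
              (fun n => proj1 (Hu n)) (fun n => proj2 (Hu n)) |}.
  split.
  - split; apply chain_map_ext; intro n; apply Hu.
  - intros u' [H1 H2]. apply chain_map_ext. intro n. apply (Hjm n); simpl.
    + rewrite (proj1 (Hu n)). exact (eq_sym (cm_eq H1 n)).
    + rewrite (proj2 (Hu n)). exact (eq_sym (cm_eq H2 n)).
Qed.

Lemma chain_desc_jointly_epic {W S X1 X2 : bcomplex E} (k1 : X1 ~> S) (k2 : X2 ~> S)
    (g1 : X1 ~> W) (g2 : X2 ~> W) :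
  (forall n, jointly_epic (cm k1 n) (cm k2 n)) ->
  (forall n, exists u, cm k1 n ;; u = cm g1 n /\ cm k2 n ;; u = cm g2 n) ->
  exists! u : S ~> W, k1 ;; u = g1 /\ k2 ;; u = g2.
Proof.
  intros Hje Hex. destruct (dependent_functional_choice _ Hex) as [u Hu].
  exists {| cm := u; cm_comm := jointly_epic_chain_comm k1 k2 g1 g2 u Hje
              (fun n => proj1 (Hu n)) (fun n => proj2 (Hu n)) |}.
  split.
  - split; apply chain_map_ext; intro n; apply Hu.
  - intros u' [H1 H2]. apply chain_map_ext. intro n. apply (Hje n); simpl.
    + rewrite (proj1 (Hu n)). exact (eq_sym (cm_eq H1 n)).
    + rewrite (proj2 (Hu n)). exact (eq_sym (cm_eq H2 n)).
Qed.

Section QuotientComplex.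
Variables (X : bcomplex E) (Q : Z -> Ob E) (q : forall n, Hom X.[n] (Q n))
  (dQ : forall n, Hom (Q n) (Q (n + 1))).
Hypothesis q_epi : forall n, epi (q n).
Hypothesis q_comm : forall n, q n ;; dQ n = X.d[n] ;; q (n + 1).

Let q_jointly_epic n : jointly_epic (q n) (q n) := epi_jointly_epic _ (q_epi n).

Definition quotient_bcomplex : bcomplex E :=
  mk_bcomplex Q dQ (dd_of_jointly_epic Q dQ X X q q q_jointly_epic q_comm q_comm)
    (bounded_of_zero_pair Q X X
       (fun n HX _ => jointly_epic_zero _ _ (q_jointly_epic n) HX HX)).

Definition quotient_map : X ~> quotient_bcomplex :=
  {| cm := q : forall n, Hom X.[n] quotient_bcomplex.[n];
     cm_comm := fun n => eq_sym (q_comm n) |}.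

End QuotientComplex.

End BoundedComplexes.

Section ComplexesRightExact.
Context {E : Cat} {Cf : seq_class E}.
Hypothesis HRE : right_exact Cf.
Context {Z0 : Ob E}.
Hypothesis hZ0 : is_zero Z0.

Lemma cb_deflation_iff {Y W : bcomplex E} (p : Y ~> W) :
  deflation (cb_confl Cf) p <-> forall n, deflation Cf (cm p n).
Proof.
  split.
  - intros (K & i & H) n. exists K.[n], (cm i n). apply H.
  - intros Hp.
    destruct (choose_objects (F := fun n K => Hom K Y.[n])
                (fun n K i => Cf _ _ _ i (cm p n)) Hp) as (K & i & Hi).
    assert (Hd : forall n, exists d, d ;; i (n + 1) = i n ;; Y.d[n]).
    { intro n. destruct (conflation_kc HRE (Hi (n + 1))) as [[_ Hk] _].
      destruct (Hk _ (i n ;; Y.d[n])) as [d [Hd _]]; eauto.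
      rewrite comp_assoc, (cm_comm p), <- comp_assoc.
      apply zero_mor_compl, (conflation_kc HRE (Hi n)). }
    destruct (dependent_functional_choice _ Hd) as [d Hdi].
    assert (Hm : forall n, jointly_monic (i n) (i n))
      by (intro; apply mono_jointly_monic, (conflation_mono HRE (Hi n))).
    set (Kc := mk_bcomplex K d (dd_of_jointly_monic hZ0 K d Y Y i i Hm Hdi Hdi)
                 (bounded_of_zero_pair K Y Y
                    (fun n HY _ => jointly_monic_zero _ _ (Hm n) HY HY))).
    exists Kc, {| cm := i : forall n, Hom Kc.[n] Y.[n]; cm_comm := Hdi |}. exact Hi.
Qed.

Lemma cb_inflation_iff {A X : bcomplex E} (i : A ~> X) :
  inflation (cb_confl Cf) i <-> forall n, inflation Cf (cm i n).
Proof.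
  split.
  - intros (Q & p & H) n. exists Q.[n], (cm p n). apply H.
  - intros Hi.
    destruct (choose_objects (F := fun n Q => Hom X.[n] Q)
                (fun n Q p => Cf _ _ _ (cm i n) p) Hi) as (Q & p & Hp).
    assert (Hd : forall n, exists d, p n ;; d = X.d[n] ;; p (n + 1)).
    { intro n. destruct (conflation_kc HRE (Hp n)) as [_ [_ Hk]].
      destruct (Hk _ (X.d[n] ;; p (n + 1))) as [d [Hd _]]; eauto.
      rewrite <- comp_assoc, <- (cm_comm i), comp_assoc.
      apply zero_mor_compr, (conflation_kc HRE (Hp (n + 1))). }
    destruct (dependent_functional_choice _ Hd) as [d Hpd].
    exists (quotient_bcomplex hZ0 X Q p d (fun n => conflation_epi HRE (Hp n)) Hpd).
    exists (quotient_map _ _ _ _ _ _ _). exact Hp.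
Qed.

Lemma cb_conflation_kc {X Y W : bcomplex E} (i : X ~> Y) (p : Y ~> W) :
  cb_confl Cf i p -> kc_pair (C := Cb E) i p.
Proof.
  intros H.
  assert (Hip : zero_mor (C := Cb E) (i ;; p))
    by (apply (cb_zero_mor_iff hZ0); intro n; apply (conflation_kc HRE (H n))).
  split; split; auto.
  - intros V g Hg. rewrite (cb_zero_mor_iff hZ0) in Hg.
    assert (Hm : forall n, jointly_monic (cm i n) (cm i n))
      by (intro; apply mono_jointly_monic, (conflation_mono HRE (H n))).
    destruct (chain_lift_jointly_monic i i g g Hm) as (u & [Hu _] & Huniq).
    { intro n. destruct (conflation_kc HRE (H n)) as [[_ Hk] _].
      destruct (Hk _ (cm g n) (Hg n)) as [u [Hu _]]. eauto. }
    exists u. split; auto.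
  - intros V g Hg. rewrite (cb_zero_mor_iff hZ0) in Hg.
    assert (He : forall n, jointly_epic (cm p n) (cm p n))
      by (intro; apply epi_jointly_epic, (conflation_epi HRE (H n))).
    destruct (chain_desc_jointly_epic p p g g He) as (u & [Hu _] & Huniq).
    { intro n. destruct (conflation_kc HRE (H n)) as [_ [_ Hk]].
      destruct (Hk _ (cm g n) (Hg n)) as [u [Hu _]]. eauto. }
    exists u. split; auto.
Qed.

Lemma cb_conflation_iso_closed (A B D A' B' D' : bcomplex E) (i : A ~> B) (p : B ~> D)
    (i' : A' ~> B') (p' : B' ~> D') (a : A ~> A') (b : B ~> B') (d : D ~> D') :
  cb_confl Cf i p -> is_iso a -> is_iso b -> is_iso d ->
  i ;; b = a ;; i' -> p ;; d = b ;; p' -> cb_confl Cf i' p'.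
Proof.
  intros H Ha Hb Hd H1 H2 n.
  exact (conflation_iso_closed HRE (H n) (cb_iso_degreewise _ Ha n) (cb_iso_degreewise _ Hb n)
           (cb_iso_degreewise _ Hd n) (cm_eq H1 n) (cm_eq H2 n)).
Qed.

Lemma cb_deflation_pullback {B D D' : bcomplex E} (p : B ~> D) (f : D' ~> D) :
  deflation (cb_confl Cf) p ->
  exists P (q1 : P ~> B) (q2 : P ~> D'), is_pullback q1 q2 p f /\ deflation (cb_confl Cf) q2.
Proof.
  rewrite cb_deflation_iff. intros Hp.
  destruct (choose_objects (F := fun n P => (Hom P B.[n] * Hom P D'.[n])%type)
              (fun n P q => is_pullback (fst q) (snd q) (cm p n) (cm f n) /\
                            deflation Cf (snd q))) as (P & q & Hq).
  { intro n. destruct (deflation_pullback HRE (cm p n) (cm f n) (Hp n))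
      as (P & q1 & q2 & H). now exists P, (q1, q2). }
  set (q1 := fun n => fst (q n)). set (q2 := fun n => snd (q n)).
  assert (Hpb : forall n, is_pullback (q1 n) (q2 n) (cm p n) (cm f n)) by apply Hq.
  assert (Hjm : forall n, jointly_monic (q1 n) (q2 n))
    by (intro n; exact (pullback_jointly_monic _ _ _ _ (Hpb n))).
  assert (Hd : forall n, exists d, d ;; q1 (n + 1) = q1 n ;; B.d[n] /\
                                   d ;; q2 (n + 1) = q2 n ;; D'.d[n]).
  { intro n. destruct (Hpb (n + 1)) as [_ Hu].
    destruct (Hu _ (q1 n ;; B.d[n]) (q2 n ;; D'.d[n])) as [d [Hd _]]; eauto.
    rewrite !comp_assoc, !cm_comm, <- !comp_assoc. f_equal. apply (Hpb n). }
  destruct (dependent_functional_choice _ Hd) as [d Hdq].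
  set (Pc := mk_bcomplex P d
               (dd_of_jointly_monic hZ0 P d B D' q1 q2 Hjm
                  (fun n => proj1 (Hdq n)) (fun n => proj2 (Hdq n)))
               (bounded_of_zero_pair P B D'
                  (fun n HB HD => jointly_monic_zero _ _ (Hjm n) HB HD))).
  set (q1c := {| cm := q1 : forall n, Hom Pc.[n] B.[n]; cm_comm := fun n => proj1 (Hdq n) |}).
  set (q2c := {| cm := q2 : forall n, Hom Pc.[n] D'.[n]; cm_comm := fun n => proj2 (Hdq n) |}).
  exists Pc, q1c, q2c. split; [split |].
  - apply chain_map_ext. intro n. apply (Hpb n).
  - intros W a b Hab. apply (chain_lift_jointly_monic q1c q2c a b Hjm).
    intro n. destruct (Hpb n) as [_ Hu].
    destruct (Hu _ (cm a n) (cm b n) (cm_eq Hab n)) as [u [Hu' _]]. eauto.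
  - apply cb_deflation_iff. intro n. apply Hq.
Qed.

Lemma has_biproducts_of_right_exact :
  forall X Y : Ob E, exists S i1 i2 p1 p2, @is_biproduct E X Y S i1 i2 p1 p2.
Proof. exact (proj1 (proj2 (proj1 (proj1 HRE)))). Qed.

Section BiproductComplex.
Variables X Y : bcomplex E.

Let b (n : Z) : biprod E X.[n] Y.[n] := chosen_biprod has_biproducts_of_right_exact _ _.

Definition biprod_d (n : Z) : Hom (bS (b n)) (bS (b (n + 1))) :=
  pair (b (n + 1)) (bp1 (b n) ;; X.d[n]) (bp2 (b n) ;; Y.d[n]).

Lemma biprod_jointly_monic n : jointly_monic (bp1 (b n)) (bp2 (b n)).
Proof. exact (biproduct_jointly_monic _ _ _ _ (bpH (b n))). Qed.

Definition biprod_bcomplex : bcomplex E :=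
  mk_bcomplex (fun n => bS (b n)) biprod_d
    (dd_of_jointly_monic hZ0 _ biprod_d X Y _ _ biprod_jointly_monic
       (fun n => pair_p1 _ _ _) (fun n => pair_p2 _ _ _))
    (bounded_of_zero_pair _ X Y
       (fun n HX HY => jointly_monic_zero _ _ (biprod_jointly_monic n) HX HY)).

Definition biprod_p1 : biprod_bcomplex ~> X :=
  {| cm := fun n => bp1 (b n) : Hom biprod_bcomplex.[n] X.[n];
     cm_comm := fun n => pair_p1 _ _ _ |}.
Definition biprod_p2 : biprod_bcomplex ~> Y :=
  {| cm := fun n => bp2 (b n) : Hom biprod_bcomplex.[n] Y.[n];
     cm_comm := fun n => pair_p2 _ _ _ |}.

Lemma biprod_i1_comm n : X.d[n] ;; bi1 (b (n + 1)) = bi1 (b n) ;; biprod_d n.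
Proof.
  pose proof (bpH (b n)) as (Hi1 & _ & Hz1 & _).
  pose proof (bpH (b (n + 1))) as (Hj1 & _ & Hy1 & _).
  apply biprod_jointly_monic; unfold biprod_d; rewrite !comp_assoc, ?pair_p1, ?pair_p2.
  - now rewrite Hj1, <- comp_assoc, Hi1, comp_idr, comp_idl.
  - apply zero_mor_eq; [apply zero_mor_compr | rewrite <- comp_assoc; apply zero_mor_compl];
      auto.
Qed.
Lemma biprod_i2_comm n : Y.d[n] ;; bi2 (b (n + 1)) = bi2 (b n) ;; biprod_d n.
Proof.
  pose proof (bpH (b n)) as (_ & Hi2 & _ & Hz2 & _).
  pose proof (bpH (b (n + 1))) as (_ & Hj2 & _ & Hy2 & _).
  apply biprod_jointly_monic; unfold biprod_d; rewrite !comp_assoc, ?pair_p1, ?pair_p2.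
  - apply zero_mor_eq; [apply zero_mor_compr | rewrite <- comp_assoc; apply zero_mor_compl];
      auto.
  - now rewrite Hj2, <- comp_assoc, Hi2, comp_idr, comp_idl.
Qed.

Definition biprod_i1 : X ~> biprod_bcomplex :=
  {| cm := fun n => bi1 (b n) : Hom X.[n] biprod_bcomplex.[n]; cm_comm := biprod_i1_comm |}.
Definition biprod_i2 : Y ~> biprod_bcomplex :=
  {| cm := fun n => bi2 (b n) : Hom Y.[n] biprod_bcomplex.[n]; cm_comm := biprod_i2_comm |}.

Lemma biprod_bcomplex_is_biproduct :
  is_biproduct (C := Cb E) biprod_i1 biprod_i2 biprod_p1 biprod_p2.
Proof.
  split; [|split; [|split; [|split; [|split]]]].
  - apply chain_map_ext. intro n. apply (bpH (b n)).
  - apply chain_map_ext. intro n. apply (bpH (b n)).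
  - apply (cb_zero_mor_iff hZ0). intro n. apply (bpH (b n)).
  - apply (cb_zero_mor_iff hZ0). intro n. apply (bpH (b n)).
  - intros W f g. apply (chain_lift_jointly_monic biprod_p1 biprod_p2 f g biprod_jointly_monic).
    intro n. destruct (pair_ex (b n) (cm f n) (cm g n)) as [u [Hu _]]. eauto.
  - intros W f g.
    apply (chain_desc_jointly_epic biprod_i1 biprod_i2 f g
             (fun n => biproduct_jointly_epic _ _ _ _ (bpH (b n)))).
    intro n. destruct (copair_ex (b n) (cm f n) (cm g n)) as [u [Hu _]]. eauto.
Qed.

End BiproductComplex.

Lemma cb_additive : additive (Cb E).
Proof.
  set (HB := has_biproducts_of_right_exact).
  split; [|split].
  - exists (zero_bcomplex hZ0). exact (zero_bcomplex_is_zero hZ0).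
  - intros X Y. eexists _, _, _, _, _. apply biprod_bcomplex_is_biproduct.
  - intros X.
    destruct (dependent_functional_choice (T := fun U : Ob E => Hom U U)
                (fun U nu => add HB (idm U) nu = zm hZ0 U U)) as [nu Hnu].
    { intro U. destruct (proj2 (proj2 (proj1 (proj1 HRE))) U) as (nu & h & Hs & Hz).
      exists nu. rewrite <- (is_sum_add hZ0 HB _ _ _ Hs). now apply zero_mor_zm. }
    set (nuX := {| cm := fun n => nu X.[n];
                   cm_comm := fun n => eq_sym (additive_inverse_natural hZ0 HB _ _ _
                                                  (Hnu X.[n]) (Hnu X.[n + 1])) |}
                : X ~> X).
    pose proof (biprod_bcomplex_is_biproduct X X) as Hb.
    destruct Hb as (_ & _ & _ & _ & Hp & Hcp).
    destruct (Hp X (idm X) nuX) as [dl [[Hd1 Hd2] _]].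
    destruct (Hcp X (idm X) (idm X)) as [nb [[Hn1 Hn2] _]].
    exists nuX, (dl ;; nb). split.
    + do 7 eexists. split; [apply biprod_bcomplex_is_biproduct|].
      exact (conj Hd1 (conj Hd2 (conj Hn1 (conj Hn2 eq_refl)))).
    + apply (cb_zero_mor_iff hZ0). intro n. change (zero_mor (cm dl n ;; cm nb n)).
      assert (Hs : is_sum (idm X.[n]) (nu X.[n]) (cm dl n ;; cm nb n)).
      { do 7 eexists. split; [apply (bpH (chosen_biprod HB X.[n] X.[n]))|].
        exact (conj (cm_eq Hd1 n) (conj (cm_eq Hd2 n)
                 (conj (cm_eq Hn1 n) (conj (cm_eq Hn2 n) eq_refl)))). }
      rewrite (is_sum_add hZ0 HB _ _ _ Hs), Hnu. apply zm_zero_mor.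
Qed.

Theorem cb_right_exact : right_exact (cb_confl Cf).
Proof.
  split; [split; [|split]|split; [|split]].
  - exact cb_additive.
  - intros A B D i p H. exact (cb_conflation_kc i p H).
  - exact cb_conflation_iso_closed.
  - intros Z HZ. apply cb_deflation_iff. intro n.
    exact (zero_idm_deflation HRE (is_zero_degreewise hZ0 Z HZ n)).
  - intros X Y W p q. rewrite !cb_deflation_iff. intros Hp Hq n.
    exact (deflation_comp HRE (Hp n) (Hq n)).
  - intros B D D' p f. exact (cb_deflation_pullback p f).
Qed.

End ComplexesRightExact.

Section Percolating.
Context {E : Cat} {Cf : seq_class E} {inA : Ob E -> Prop}.
Hypothesis HRE : right_exact Cf.
Hypothesis HP : right_percolating Cf inA.
Context {Z0 : Ob E}.
Hypothesis hZ0 : is_zero Z0.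

Lemma percolating_P1 {A' A A''} (i : Hom A' A) (p : Hom A A'') :
  Cf _ _ _ i p -> (inA A <-> (inA A' /\ inA A'')).
Proof. destruct HP as (_ & H & _). apply H. Qed.
Lemma percolating_P2 {X A} (f : Hom X A) : inA A ->
  exists (A' : Ob E) (p : Hom X A') (g : Hom A' A), inA A' /\ deflation Cf p /\ f = p ;; g.
Proof. destruct HP as (_ & _ & H & _). apply H. Qed.
Lemma percolating_P3 {X D A} (i : Hom X D) (p : Hom X A) :
  inflation Cf i -> deflation Cf p -> inA A ->
  exists (P : Ob E) (a : Hom A P) (d : Hom D P),
    is_pushout p i a d /\ inflation Cf a /\ deflation Cf d.
Proof. destruct HP as (_ & _ & _ & H & _). apply H. Qed.
Lemma percolating_P4 {A X B} (a : Hom A X) (b : Hom X B) :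
  inA A -> inA B -> inflation Cf a -> deflation Cf b ->
  exists (A' B' : Ob E) (q : Hom A A') (r : Hom X B') (j : Hom A' B') (s : Hom B' B),
    inA A' /\ inA B' /\ deflation Cf q /\ deflation Cf r /\ inflation Cf j /\
    a ;; r = q ;; j /\ b = r ;; s.
Proof. destruct HP as (_ & _ & _ & _ & H). apply H. Qed.

Lemma in_iso_closed {U V} (phi : Hom U V) : is_iso phi -> inA U -> inA V.
Proof.
  intros Hphi HU. destruct (iso_deflation HRE phi Hphi) as (K & i & H).
  exact (proj2 (proj1 (percolating_P1 i phi H) HU)).
Qed.

(* Factoring some [U -> X] with [X] in A through P2 gives a deflation from the zero
   object [U] onto an object of A, which is therefore zero as well. *)
Lemma zero_in {U : Ob E} : is_zero U -> inA U.
Proof.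
  intros HU. destruct HP as ((X & HX) & _).
  destruct (zero_from (Y := X) HU) as [f _].
  destruct (percolating_P2 f HX) as (A' & p & _ & HA' & Hp & _).
  assert (HA'0 : is_zero A')
    by exact (jointly_epic_zero _ _ (epi_jointly_epic _ (deflation_epi HRE Hp)) HU HU).
  destruct (zero_from (Y := U) HA'0) as [g _].
  exact (in_iso_closed g (zero_iso g HA'0 HU) HA').
Qed.

Lemma inflation_cokernel_in {A P U} (a : Hom A P) (t : Hom P U) :
  inflation Cf a -> is_cokernel t a -> inA A -> inA U -> inA P.
Proof.
  intros (Q & c & Hac) Ht HA HU.
  destruct (cokernel_unique a c t (proj2 (conflation_kc HRE Hac)) Ht) as (psi & Hpsi & _).
  apply (percolating_P1 _ _ Hac). split; auto. exact (in_iso_closed psi Hpsi HU).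
Qed.

(* Factor [f2] through a deflation [u] with kernel [k], factor [k ;; f1] through a
   deflation [v] by P2, and push [k] out along [v] by P3: the pushout is the common
   factor, and it lies in A as an extension of objects of A. *)
Lemma common_deflation_factor {X A1 A2} (f1 : Hom X A1) (f2 : Hom X A2) :
  inA A1 -> inA A2 ->
  exists W (w : Hom X W) (h1 : Hom W A1) (h2 : Hom W A2),
    inA W /\ deflation Cf w /\ w ;; h1 = f1 /\ w ;; h2 = f2.
Proof.
  intros HA1 HA2.
  destruct (percolating_P2 f2 HA2) as (U & u & g2 & HU & (K & k & Hku) & Hf2).
  destruct (percolating_P2 (k ;; f1) HA1) as (A'' & v & h & HA'' & Hv & Hkf).
  destruct (percolating_P3 k v (ex_intro _ U (ex_intro _ u Hku)) Hv HA'')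
    as (P & a & d & Hpo & Ha & Hd).
  pose proof Hpo as [Hpc Hup].
  destruct (Hup _ h f1) as [h1 [[_ Hh1] _]]. { now rewrite Hkf. }
  destruct (Hup _ (zm hZ0 A'' U) u) as [t [[Hat Hdt] _]].
  { apply zero_mor_eq; [apply zero_mor_compr, zm_zero_mor | apply (conflation_kc HRE Hku)]. }
  exists P, d, h1, (t ;; g2). repeat split; auto.
  - apply (inflation_cokernel_in a t Ha); auto.
    apply (pushout_cokernel HRE k u v a d t Hku Hpo (deflation_epi HRE Hd)); auto.
    rewrite Hat. apply zm_zero_mor.
  - now rewrite <- comp_assoc, Hdt.
Qed.

Lemma cb_P1 (A' A A'' : bcomplex E) (i : A' ~> A) (p : A ~> A'') :
  cb_confl Cf i p -> (cb_sub inA A <-> (cb_sub inA A' /\ cb_sub inA A'')).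
Proof.
  intros H. split.
  - intros HA. split; intro n; apply (proj1 (percolating_P1 _ _ (H n)) (HA n)).
  - intros [H1 H2] n. apply (proj2 (percolating_P1 _ _ (H n))). auto.
Qed.

Lemma cb_P3 (X D A : bcomplex E) (i : X ~> D) (p : X ~> A) :
  inflation (cb_confl Cf) i -> deflation (cb_confl Cf) p -> cb_sub inA A ->
  exists (P : bcomplex E) (a : A ~> P) (d : D ~> P),
    is_pushout (C := Cb E) p i a d /\ inflation (cb_confl Cf) a /\ deflation (cb_confl Cf) d.
Proof.
  rewrite (cb_inflation_iff HRE hZ0), (cb_deflation_iff HRE hZ0). intros Hi Hp HA.
  destruct (choose_objects (F := fun n P => (Hom A.[n] P * Hom D.[n] P)%type)
              (fun n P ad => is_pushout (cm p n) (cm i n) (fst ad) (snd ad) /\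
                             inflation Cf (fst ad) /\ deflation Cf (snd ad))) as (P & ad & Had).
  { intro n. destruct (percolating_P3 (cm i n) (cm p n) (Hi n) (Hp n) (HA n))
      as (P & a & d & H). now exists P, (a, d). }
  set (a := fun n => fst (ad n)). set (d := fun n => snd (ad n)).
  assert (Hpo : forall n, is_pushout (cm p n) (cm i n) (a n) (d n)) by apply Had.
  assert (Hje : forall n, jointly_epic (a n) (d n))
    by (intro n; exact (pushout_jointly_epic _ _ _ _ (Hpo n))).
  assert (Hdiff : forall n, exists dP, a n ;; dP = A.d[n] ;; a (n + 1) /\
                                       d n ;; dP = D.d[n] ;; d (n + 1)).
  { intro n. destruct (Hpo n) as [_ Hu].
    destruct (Hu _ (A.d[n] ;; a (n + 1)) (D.d[n] ;; d (n + 1))) as [dP [HdP _]]; eauto.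
    rewrite <- !comp_assoc, <- !cm_comm, !comp_assoc. f_equal. apply (Hpo (n + 1)). }
  destruct (dependent_functional_choice _ Hdiff) as [dP HdP].
  set (Pc := mk_bcomplex P dP
               (dd_of_jointly_epic hZ0 P dP A D a d Hje
                  (fun n => proj1 (HdP n)) (fun n => proj2 (HdP n)))
               (bounded_of_zero_pair P A D
                  (fun n HA HD => jointly_epic_zero _ _ (Hje n) HA HD))).
  set (ac := {| cm := a : forall n, Hom A.[n] Pc.[n];
                cm_comm := fun n => eq_sym (proj1 (HdP n)) |}).
  set (dc := {| cm := d : forall n, Hom D.[n] Pc.[n];
                cm_comm := fun n => eq_sym (proj2 (HdP n)) |}).
  exists Pc, ac, dc. split; [split | split].
  - apply chain_map_ext. intro n. apply (Hpo n).
  - intros W f g Hfg. apply (chain_desc_jointly_epic ac dc f g Hje).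
    intro n. destruct (Hpo n) as [_ Hu].
    destruct (Hu _ (cm f n) (cm g n) (cm_eq Hfg n)) as [u [Hu' _]]. eauto.
  - apply (cb_inflation_iff HRE hZ0). intro n. apply Had.
  - apply (cb_deflation_iff HRE hZ0). intro n. apply Had.
Qed.

End Percolating.

Section DescendingRecursion.
Variables (D : Z -> Type) (R : forall n, D n -> D (n + 1) -> Prop) (N : Z)
  (base : forall n, N <= n -> D n).
Hypothesis base_rel : forall n h s, R n (base n h) s.
Hypothesis step_ex : forall n s, exists t, R n t s.

Let step n (s : D (n + 1)) : D n :=
  proj1_sig (constructive_indefinite_description _ (step_ex n s)).

(* [k] is fuel: at least the number of steps from [N] down to [n]. *)
Fixpoint descend (k : nat) : forall n, N - n <= Z.of_nat k -> D n :=
  match k return forall n, N - n <= Z.of_nat k -> D n with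
  | O => fun n h => base n ltac:(lia)
  | S k' => fun n h =>
      match Z_lt_dec n N with
      | left _ => step n (descend k' (n + 1) ltac:(lia))
      | right hn => base n ltac:(lia)
      end
  end.

Lemma descend_fuel_irrelevant k : forall k' n h h', descend k n h = descend k' n h'.
Proof.
  induction k as [|k IH]; intros [|k'] n h h'; simpl.
  - f_equal. apply proof_irrelevance.
  - destruct (Z_lt_dec n N); [lia | f_equal; apply proof_irrelevance].
  - destruct (Z_lt_dec n N); [lia | f_equal; apply proof_irrelevance].
  - destruct (Z_lt_dec n N); f_equal; first [apply IH | apply proof_irrelevance].
Qed.

Lemma descend_enough_fuel n : N - n <= Z.of_nat (Z.to_nat (N - n)).
Proof. lia. Qed.

Lemma descending_recursion : exists x : forall n, D n, forall n, R n (x n) (x (n + 1)).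
Proof.
  set (x := fun n => descend (Z.to_nat (N - n)) n (descend_enough_fuel n)).
  exists x. intro n.
  destruct (Z_lt_dec n N) as [Hlt | Hge].
  - assert (Hx : x n = step n (x (n + 1))).
    { unfold x. rewrite (descend_fuel_irrelevant _ (S (Z.to_nat (N - (n + 1)))) n _
                           ltac:(lia)).
      simpl. destruct (Z_lt_dec n N); [|lia]. f_equal. apply descend_fuel_irrelevant. }
    rewrite Hx. exact (proj2_sig (constructive_indefinite_description _ (step_ex n _))).
  - unfold x at 1. rewrite (descend_fuel_irrelevant _ 0 n _ ltac:(lia)). apply base_rel.
Qed.

End DescendingRecursion.

Section ComplexesPercolating.
Context {E : Cat} {Cf : seq_class E} {inA : Ob E -> Prop}.
Hypothesis HRE : right_exact Cf.
Hypothesis HP : right_percolating Cf inA.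
Context {Z0 : Ob E}.
Hypothesis hZ0 : is_zero Z0.

Lemma eventually_zero (X : bcomplex E) : exists N, forall n, N <= n -> is_zero X.[n].
Proof. destruct (bc_bounded X) as (a & b & H). exists (b + 1). intros n Hn. apply H. lia. Qed.

Section FactorThroughDeflation.
Variables (X A : bcomplex E) (f : X ~> A).
Hypothesis HA : cb_sub inA A.

Record factorization (n : Z) := {
  fz_obj : Ob E; fz_defl : Hom X.[n] fz_obj; fz_map : Hom fz_obj A.[n];
  fz_in : inA fz_obj; fz_is_defl : deflation Cf fz_defl;
  fz_comp : fz_defl ;; fz_map = cm f n }.
Arguments fz_obj {n}. Arguments fz_defl {n}. Arguments fz_map {n}.
Arguments fz_in {n}. Arguments fz_is_defl {n}. Arguments fz_comp {n}.

Definition factorization_compatible n (t : factorization n) (s : factorization (n + 1)) :=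
  exists d : Hom (fz_obj t) (fz_obj s),
    fz_defl t ;; d = X.d[n] ;; fz_defl s /\ d ;; fz_map s = fz_map t ;; A.d[n].

Definition trivial_factorization n (HX : is_zero X.[n]) : factorization n :=
  {| fz_defl := idm X.[n]; fz_map := cm f n; fz_in := zero_in HRE HP HX;
     fz_is_defl := zero_idm_deflation HRE HX; fz_comp := comp_idl (cm f n) |}.

Lemma trivial_factorization_compatible n HX s :
  factorization_compatible n (trivial_factorization n HX) s.
Proof.
  exists (X.d[n] ;; fz_defl s). simpl. split.
  - apply comp_idl.
  - now rewrite comp_assoc, fz_comp, cm_comm.
Qed.

(* Factor [cm f n] and [X.d[n] ;; fz_defl s] through one deflation. *)
Lemma factorization_extend_down n (s : factorization (n + 1)) :
  exists t, factorization_compatible n t s.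
Proof.
  destruct (common_deflation_factor HRE HP hZ0 (cm f n) (X.d[n] ;; fz_defl s)
              (HA n) (fz_in s)) as (W & w & h1 & h2 & HW & Hw & H1 & H2).
  exists {| fz_in := HW; fz_is_defl := Hw; fz_comp := H1 |}, h2. split; auto.
  simpl. apply (deflation_epi HRE Hw).
  now rewrite <- comp_assoc, H2, comp_assoc, fz_comp, cm_comm, <- comp_assoc, H1.
Qed.

Lemma cb_P2 : exists (A' : bcomplex E) (p : X ~> A') (g : A' ~> A),
  cb_sub inA A' /\ deflation (cb_confl Cf) p /\ f = p ;; g.
Proof.
  destruct (eventually_zero X) as (N & HX).
  destruct (descending_recursion factorization factorization_compatible N
              (fun n h => trivial_factorization n (HX n h))
              (fun n h => trivial_factorization_compatible n (HX n h))
              factorization_extend_down) as (fz & Hfz).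
  destruct (dependent_functional_choice _ Hfz) as (d & Hd).
  set (A' := quotient_bcomplex hZ0 X (fun n => fz_obj (fz n)) (fun n => fz_defl (fz n)) d
               (fun n => deflation_epi HRE (fz_is_defl (fz n))) (fun n => proj1 (Hd n))).
  exists A', (quotient_map _ _ _ _ _ _ _),
    {| cm := fun n => fz_map (fz n) : Hom A'.[n] A.[n]; cm_comm := fun n => proj2 (Hd n) |}.
  split; [|split].
  - intro n. apply fz_in.
  - apply (cb_deflation_iff HRE hZ0). intro n. apply fz_is_defl.
  - apply chain_map_ext. intro n. symmetry. apply fz_comp.
Qed.

End FactorThroughDeflation.

Section AdmissibleFactorization.
Variables (A X B : bcomplex E) (a : A ~> X) (b : X ~> B).
Hypothesis HA : cb_sub inA A.
Hypothesis HB : cb_sub inA B.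
Hypothesis Ha : forall n, inflation Cf (cm a n).

Record p4_square (n : Z) := {
  sq_B' : Ob E; sq_A' : Ob E;
  sq_r : Hom X.[n] sq_B'; sq_s : Hom sq_B' B.[n];
  sq_q : Hom A.[n] sq_A'; sq_j : Hom sq_A' sq_B';
  sq_in_B' : inA sq_B'; sq_in_A' : inA sq_A';
  sq_r_defl : deflation Cf sq_r; sq_q_defl : deflation Cf sq_q; sq_j_infl : inflation Cf sq_j;
  sq_comm : cm a n ;; sq_r = sq_q ;; sq_j; sq_factor : cm b n = sq_r ;; sq_s }.
Arguments sq_B' {n}. Arguments sq_A' {n}. Arguments sq_r {n}. Arguments sq_s {n}.
Arguments sq_q {n}. Arguments sq_j {n}. Arguments sq_in_B' {n}. Arguments sq_in_A' {n}.
Arguments sq_r_defl {n}. Arguments sq_q_defl {n}. Arguments sq_j_infl {n}.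
Arguments sq_comm {n}. Arguments sq_factor {n}.

Definition p4_compatible n (t : p4_square n) (u : p4_square (n + 1)) :=
  exists (dB : Hom (sq_B' t) (sq_B' u)) (dA : Hom (sq_A' t) (sq_A' u)),
    sq_r t ;; dB = X.d[n] ;; sq_r u /\ sq_s t ;; B.d[n] = dB ;; sq_s u /\
    sq_q t ;; dA = A.d[n] ;; sq_q u /\ sq_j t ;; dB = dA ;; sq_j u.

Definition trivial_p4_square n (HX : is_zero X.[n]) : p4_square n :=
  {| sq_r := idm X.[n]; sq_s := cm b n; sq_q := idm A.[n]; sq_j := cm a n;
     sq_in_B' := zero_in HRE HP HX; sq_in_A' := HA n;
     sq_r_defl := zero_idm_deflation HRE HX; sq_q_defl := iso_deflation HRE _ (idm_iso _);
     sq_j_infl := Ha n; sq_comm := eq_trans (comp_idr _) (eq_sym (comp_idl _));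
     sq_factor := eq_sym (comp_idl _) |}.

Lemma trivial_p4_square_compatible n HX u : p4_compatible n (trivial_p4_square n HX) u.
Proof.
  exists (X.d[n] ;; sq_r u), (A.d[n] ;; sq_q u). simpl. repeat split.
  - apply comp_idl.
  - now rewrite comp_assoc, <- sq_factor, cm_comm.
  - apply comp_idl.
  - now rewrite comp_assoc, <- sq_comm, <- !comp_assoc, (cm_comm a).
Qed.

(* Factor [cm b n] and [X.d[n] ;; sq_r u] through one deflation [w], then apply
   P4 to [cm a n] and [w]. *)
Lemma p4_square_extend_down n (u : p4_square (n + 1)) : exists t, p4_compatible n t u.
Proof.
  destruct (common_deflation_factor HRE HP hZ0 (cm b n) (X.d[n] ;; sq_r u) (HB n) (sq_in_B' u))
    as (W & w & be & ga & HW & Hw & Hbe & Hga).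
  destruct (percolating_P4 HP (cm a n) w (HA n) HW (Ha n) Hw)
    as (A' & B' & q & r & j & s & HA' & HB' & Hq & Hr & Hj & Hsq & Hrs).
  assert (Hfac : cm b n = r ;; (s ;; be)) by (now rewrite <- comp_assoc, <- Hrs).
  exists {| sq_in_B' := HB'; sq_in_A' := HA'; sq_r_defl := Hr; sq_q_defl := Hq;
            sq_j_infl := Hj; sq_comm := Hsq; sq_factor := Hfac |}.
  assert (Hr_ga : r ;; (s ;; ga) = X.d[n] ;; sq_r u) by (now rewrite <- comp_assoc, <- Hrs).
  assert (Ha_ga : A.d[n] ;; (sq_q u ;; sq_j u) = cm a n ;; (r ;; (s ;; ga))).
  { now rewrite <- sq_comm, <- comp_assoc, (cm_comm a), comp_assoc, <- Hr_ga. }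
  destruct Hq as (K & k & Hkq).
  destruct (proj2 (conflation_kc HRE Hkq)) as [Hkq0 Hcok].
  destruct (Hcok _ (A.d[n] ;; sq_q u)) as [dA [HdA _]].
  { pose proof (mono_jointly_monic _ (inflation_mono HRE (sq_j_infl u))) as Hj_mono.
    assert (Hz : zero_mor (k ;; (A.d[n] ;; sq_q u) ;; sq_j u)).
    { rewrite !comp_assoc, Ha_ga, <- (comp_assoc (cm a n)), Hsq, <- !comp_assoc.
      now apply zero_mor_compl, zero_mor_compl, zero_mor_compl. }
    exact (jointly_monic_zero_mor hZ0 _ _ _ Hj_mono Hz Hz). }
  exists (s ;; ga), dA. simpl. repeat split; auto.
  - apply (deflation_epi HRE Hr).
    now rewrite <- !comp_assoc, <- Hrs, Hbe, Hga, <- (cm_comm b), (sq_factor u), comp_assoc.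
  - apply (deflation_epi HRE (ex_intro _ K (ex_intro _ k Hkq))).
    now rewrite <- !comp_assoc, <- Hsq, HdA, !comp_assoc, <- Ha_ga.
Qed.

Lemma cb_P4 : exists (A' B' : bcomplex E) (q : A ~> A') (r : X ~> B') (j : A' ~> B') (s : B' ~> B),
  cb_sub inA A' /\ cb_sub inA B' /\ deflation (cb_confl Cf) q /\
  deflation (cb_confl Cf) r /\ inflation (cb_confl Cf) j /\ a ;; r = q ;; j /\ b = r ;; s.
Proof.
  destruct (eventually_zero X) as (N & HX).
  destruct (descending_recursion p4_square p4_compatible N
              (fun n h => trivial_p4_square n (HX n h))
              (fun n h => trivial_p4_square_compatible n (HX n h))
              p4_square_extend_down) as (sq & Hsq).
  destruct (dependent_functional_choice _ Hsq) as (dB & HdB).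
  destruct (dependent_functional_choice _ HdB) as (dA & Hd).
  set (A' := quotient_bcomplex hZ0 A (fun n => sq_A' (sq n)) (fun n => sq_q (sq n)) dA
               (fun n => deflation_epi HRE (sq_q_defl (sq n)))
               (fun n => proj1 (proj2 (proj2 (Hd n))))).
  set (B' := quotient_bcomplex hZ0 X (fun n => sq_B' (sq n)) (fun n => sq_r (sq n)) dB
               (fun n => deflation_epi HRE (sq_r_defl (sq n))) (fun n => proj1 (Hd n))).
  exists A', B', (quotient_map _ _ _ _ _ _ _), (quotient_map _ _ _ _ _ _ _),
    {| cm := fun n => sq_j (sq n) : Hom A'.[n] B'.[n];
       cm_comm := fun n => eq_sym (proj2 (proj2 (proj2 (Hd n)))) |},
    {| cm := fun n => sq_s (sq n) : Hom B'.[n] B.[n];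
       cm_comm := fun n => eq_sym (proj1 (proj2 (Hd n))) |}.
  repeat split.
  - intro n. apply sq_in_A'.
  - intro n. apply sq_in_B'.
  - apply (cb_deflation_iff HRE hZ0). intro n. apply sq_q_defl.
  - apply (cb_deflation_iff HRE hZ0). intro n. apply sq_r_defl.
  - apply (cb_inflation_iff HRE hZ0). intro n. apply sq_j_infl.
  - apply chain_map_ext. intro n. apply sq_comm.
  - apply chain_map_ext. intro n. apply sq_factor.
Qed.

End AdmissibleFactorization.
End ComplexesPercolating.

Theorem proposition4p12 (E : Cat) (Cf : seq_class E) (inA : Ob E -> Prop) :
  right_exact Cf -> right_percolating Cf inA ->
  right_exact (cb_confl Cf) /\ right_percolating (cb_confl Cf) (cb_sub inA).
Proof.
  intros HRE HP. destruct (proj1 (proj1 (proj1 HRE))) as [Z0 hZ0].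
  split; [exact (cb_right_exact HRE hZ0) |].
  split; [| split; [| split; [| split]]].
  - exists (zero_bcomplex hZ0). intro n. exact (zero_in HRE HP hZ0).
  - exact (cb_P1 HP).
  - exact (cb_P2 HRE HP hZ0).
  - exact (cb_P3 HRE HP hZ0).
  - (* The deflation [b] is refactored degreewise anyway, so P4 does not use it. *)
    intros A X B a b HA HB Ha _. rewrite (cb_inflation_iff HRE hZ0) in Ha.
    exact (cb_P4 HRE HP hZ0 A X B a b HA HB Ha).
Qed.
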